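(* Let $\mathcal{I}$ be an ideal on $\omega$. Then (1) $\mathrm{FIN}\otimes\mathcal{I}\notin P^-$, and (2) $\rho^{(\mathrm{FIN}\otimes\mathcal{I})}\in P^-$ (for any choice of almost disjoint family $\mathcal{A}$ and enumeration of $(\mathrm{FIN}\otimes\mathcal{I})^+$ in its definition).
   Context: An ideal on a set $X$: $\mathcal{J}\subseteq\mathcal{P}(X)$ with $\emptyset\in\mathcal{J}$, $X\notin\mathcal{J}$, closed under finite unions and subsets, containing all finite sets; $\mathcal{J}^+=\mathcal{P}(X)\setminus\mathcal{J}$. $\mathrm{FIN}\otimes\mathcal{I}$ is the ideal on $\omega\times\omega$: $A\in\mathrm{FIN}\otimes\mathcal{I}$ iff $\{n:\{k:(n,k)\in A\}\notin\mathcal{I}\}$ is finite. Definition of $\rho^{(\mathrm{FIN}\otimes\mathcal{I})}$: let $\mathcal{A}=\{A_\alpha:\alpha<\mathfrak{c}\}$ be an almost disjoint family on $\omega$ (pairwise distinct infinite subsets of $\omega$ with pairwise finite intersections), $(\mathrm{FIN}\otimes\mathcal{I})^+=\{B_\alpha:\alpha<\mathfrak{c}\}$ an enumeration, $P_n=\{n\}\times\omega$, $\overline{\mathcal{A}}=\{A\setminus K:A\in\mathcal{A},K\in[\omega]^{<\omega}\}$, and $\rho^{(\mathrm{FIN}\otimes\mathcal{I})}\colon\overline{\mathcal{A}}\to[\omega\times\omega]^\omega$, $\rho^{(\mathrm{FIN}\otimes\mathcal{I})}(A_\alpha\setminus K)=B_\alpha\setminus\bigcup\{P_n:n<\max(K\cap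 A_\alpha)\}$, with $\max\emptyset=0$. This is a partition regular function (domain $\overline{\mathcal{A}}\subseteq[\omega]^\omega$, values in $[\omega\times\omega]^\omega$) with $\mathcal{I}_{\rho}=\mathrm{FIN}\otimes\mathcal{I}$. For a function $\rho\colon\mathcal{F}\to[\Lambda]^\omega$, $\mathcal{F}\subseteq[\Omega]^\omega$, let $\mathcal{I}_\rho=\{A\subseteq\Lambda:\forall F\in\mathcal{F}\ \rho(F)\not\subseteq A\}$; $\rho\in P^-$ means: for every decreasing $A_0\supseteq A_1\supseteq\dots$ of subsets of $\Lambda$ with $A_0\notin\mathcal{I}_\rho$ and $A_n\setminus A_{n+1}\in\mathcal{I}_\rho$ for all $n$, there is $F\in\mathcal{F}$ with $\rho(F)\subseteq A_0$ such that for each $n$ some finite $K\subseteq\Omega$ has $\rho(F\setminus K)\subseteq A_n$. For an ideal $\mathcal{J}$ on $\Lambda$, $\mathcal{J}\in P^-$ means: for every decreasing $A_0\supseteq A_1\supseteq\dots$ with $A_0\in\mathcal{J}^+$ and $A_n\setminus A_{n+1}\in\mathcal{J}$ there is $B\in\mathcal{J}^+$, $B\subseteq A_0$, with $B\setminus A_n$ finite for each $n$. *)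

From mathcomp Require Import all_boot.
From mathcomp Require Import boolp classical_sets cardinality.
Set Implicit Arguments. Unset Strict Implicit. Unset Printing Implicit Defensive.
Local Open Scope classical_set_scope.

Definition is_ideal (X : Type) (J : set (set X)) : Prop :=
  [/\ J set0, ~ J setT,
      (forall A B, J A -> J B -> J (A `|` B)),
      (forall A B, B `<=` A -> J A -> J B) &
      (forall A, finite_set A -> J A)].

Definition positive (X : Type) (J : set (set X)) : set (set X) := ~` J.

Definition FINxI (I : set (set nat)) : set (set (nat * nat)) :=
  fun A => finite_set [set n | ~ I [set k | A (n, k)]].

Definition Pminus_ideal (X : Type) (J : set (set X)) : Prop :=
  forall A : nat -> set X,
    (forall n, A n.+1 `<=` A n) -> ~ J (A 0) ->
    (forall n, J (A n `\` A n.+1)) ->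
    exists B : set X, [/\ ~ J B, B `<=` A 0 & forall n, finite_set (B `\` A n)].

Definition Irho (Om La : Type) (F : set (set Om)) (rho : set Om -> set La)
  : set (set La) :=
  fun A => forall G, F G -> ~ (rho G `<=` A).

Definition Pminus_fun (Om La : Type) (F : set (set Om)) (rho : set Om -> set La)
  : Prop :=
  forall A : nat -> set La,
    (forall n, A n.+1 `<=` A n) -> ~ Irho F rho (A 0) ->
    (forall n, Irho F rho (A n `\` A n.+1)) ->
    exists G, [/\ F G, rho G `<=` A 0 &
      forall n, exists K : set Om, finite_set K /\ rho (G `\` K) `<=` A n].

(* max of a set of naturals, with max of the empty set = 0 *)
Definition maxset (S : set nat) : nat :=
  xget 0%N (fun n => S n /\ forall m, S m -> (m <= n)%N).

Definition column (n : nat) : set (nat * nat) := [set p | p.1 = n].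

Definition almost_disjoint_family (Idx : Type) (A : Idx -> set nat) : Prop :=
  [/\ (forall a b, A a = A b -> a = b),
      (forall a, infinite_set (A a)) &
      (forall a b, a <> b -> finite_set (A a `&` A b))].

Definition Abar (Idx : Type) (A : Idx -> set nat) : set (set nat) :=
  fun X => exists a K, finite_set K /\ X = A a `\` K.

Definition is_rho_FINxI (Idx : Type) (A : Idx -> set nat)
  (B : Idx -> set (nat * nat)) (rho : set nat -> set (nat * nat)) : Prop :=
  forall a K, finite_set K ->
    rho (A a `\` K) =
      B a `\` \bigcup_(n in [set n | (n < maxset (K `&` A a))%N]) column n.

From Pilot Require Import Defs.
From mathcomp Require Import all_boot.
From mathcomp Require Import boolp classical_sets cardinality finmap.
Set Implicit Arguments. Unset Strict Implicit. Unset Printing Implicit Defensive.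
Local Open Scope classical_set_scope.

(* Part 1: the tails [n <= p.1] descend from the whole square by single
   columns, which are small; but a set almost contained in every tail has only
   finite sections, so it is small as well.
   Part 2: [rho] attains every [B a] up to finitely many columns, so [I_rho] is
   exactly FIN (x) I. Given positive sets [C 0 >= C 1 >= ...] with small
   differences, pick for each n a column [m n >= n] on which [C n] has a
   positive section; the union D of these sections is positive and lies in
   [C n] beyond column [max_(j<n) m j]. If [D = B a], removing from [A a] a
   single point [k] past that column makes [rho] cut away the columns below
   [k]. *)

Lemma finite_nat_ubound (S : set nat) : finite_set S -> exists b, S `<=` `I_b.
Proof.
move=> /finite_fsetP [X ->]; exists (\max_(x <- X) x).+1 => x /= Xx.
by rewrite ltnS (leq_bigmax_seq _ Xx).
Qed.

Lemma infinite_nat_unbounded (S : set nat) b :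
  infinite_set S -> exists2 x, S x & (b <= x)%N.
Proof.
move=> infS; apply: contrapT => noS; apply/infS/(sub_finite_set _ (finite_II b)).
by move=> x Sx /=; rewrite ltnNge; apply/negP => bx; apply: noS; exists x.
Qed.

Lemma maxsetE (S : set nat) n :
  S n -> (forall m, S m -> (m <= n)%N) -> Defs.maxset S = n.
Proof.
move=> Sn Sle; rewrite /Defs.maxset.
case: xgetP => [m _ [Sm Smle]|/(_ n)[]//]; apply/eqP.
by rewrite eqn_leq Sle //= Smle.
Qed.

Lemma nonincreasing_subset T (C : nat -> set T) :
  (forall n, C n.+1 `<=` C n) -> forall m n, (m <= n)%N -> C n `<=` C m.
Proof.
move=> decC m n /subnK <-; elim: (n - m)%N => [|d IH] //= p Cp.
exact/IH/decC.
Qed.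

Section FINxI.
Variable I : set (set nat).
Hypothesis HI : is_ideal I.

Definition positive_sections (C : set (nat * nat)) : set nat :=
  [set n | ~ I [set k | C (n, k)]].


Lemma FINxI_subset B C : B `<=` C -> FINxI I C -> FINxI I B.
Proof.
case: HI => _ _ _ Isub _ BC; apply: sub_finite_set => n /= IBn ICn.
by apply/IBn/(Isub _ _ _ ICn) => k /BC.
Qed.

Lemma FINxI_setU B C : FINxI I B -> FINxI I C -> FINxI I (B `|` C).
Proof.
case: HI => _ _ IU _ _ FB FC.
apply: (@sub_finite_set _ _ (positive_sections B `|` positive_sections C)); last by rewrite finite_setU.
move=> n /= IBCn.
apply: contrapT => /not_orP[/contrapT IBn /contrapT ICn].
exact/IBCn/IU.
Qed.

Lemma FINxI_columns M : FINxI I (\bigcup_(n < M) column n).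
Proof.
case: HI => I0 _ _ Isub _; apply: (sub_finite_set _ (finite_II M)) => n /= In.
rewrite ltnNge; apply/negP => Mn; apply/In/(Isub _ _ _ I0) => k [j /= jM].
by rewrite /column /= => nj; move: jM; rewrite -nj ltnNge Mn.
Qed.

Lemma not_FINxI_setT : ~ FINxI I setT.
Proof.
case: HI => _ IT _ _ _ /(sub_finite_set _) finT; apply/infinite_nat/finT.
by move=> n _; exact: IT.
Qed.

Lemma FINxI_setD B C : FINxI I (B `\` C) -> FINxI I C -> FINxI I B.
Proof.
move=> FBC FC; apply: (FINxI_subset _ (FINxI_setU FBC FC)) => p Bp.
by have [Cp|nCp] := pselect (C p); [right|left].
Qed.

Lemma FINxI_not_Pminus : ~ Pminus_ideal (FINxI I).
Proof.
pose tail n := [set p : nat * nat | (n <= p.1)%N].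
move=> /(_ tail) [].
- by move=> n p /ltnW.
- by move=> /(FINxI_subset (B := setT) (fun p _ => leq0n _)) /not_FINxI_setT.
- move=> n; apply: (FINxI_subset _ (FINxI_columns n.+1)) => p [np].
  by move/negP; rewrite -ltnNge => pn; exists p.1.
move=> D [posD _ finD]; apply/posD/(sub_finite_set _ (finite_set0 nat)).
case: HI => _ _ _ _ Ifin n /= IDn; apply/IDn/Ifin.
apply: (sub_finite_set _ (finite_image snd (finD n.+1))) => k Dnk.
by exists (n, k) => //; split => //=; rewrite /tail /= ltnn.
Qed.

Lemma FINxI_decreasing_positive (C : nat -> set (nat * nat)) :
  (forall n, C n.+1 `<=` C n) -> ~ FINxI I (C 0) ->
  (forall n, FINxI I (C n `\` C n.+1)) -> forall n, ~ FINxI I (C n).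
Proof.
move=> decC posC0 FdC.
have FC0D n : FINxI I (C 0 `\` C n).
  elim: n => [|n IH]; first by apply: (FINxI_subset _ (FINxI_columns 0)) => p [].
  apply: (FINxI_subset _ (FINxI_setU IH (FdC n))) => p [C0p nCp].
  by have [Cnp|nCnp] := pselect (C n p); [right|left].
by move=> n FCn; apply/posC0/(FINxI_setD (FC0D n)).
Qed.

Lemma FINxI_diagonal (C : nat -> set (nat * nat)) :
  (forall n, C n.+1 `<=` C n) -> (forall n, ~ FINxI I (C n)) ->
  exists D, [/\ ~ FINxI I D, D `<=` C 0 &
    forall n, exists M, forall p, D p -> (M <= p.1)%N -> C n p].
Proof.
move=> decC posC.
have positive_column n : exists x, (n <= x)%N /\ positive_sections (C n) x.
  by have [x Cx nx] := infinite_nat_unbounded n (posC n); exists x.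
have [m mP] := choice positive_column.
pose D := [set p : nat * nat | exists n, C n p /\ p.1 = m n].
exists D; split.
- move=> /finite_nat_ubound [b bD]; have [bm posm] := mP b.
  suff : (m b < b)%N by rewrite ltnNge bm.
  case: HI => _ _ _ Isub _; apply: (bD (m b)) => ID; apply/posm/(Isub _ _ _ ID).
  by move=> k Cbk; exists b.
- by move=> p [n [Cnp _]]; apply: (nonincreasing_subset decC (leq0n n)).
move=> n; exists (\max_(j < n) (m j).+1) => p [j [Cjp pj]].
have [nj|jn] := leqP n j; first by move=> _; apply: (nonincreasing_subset decC nj).
by rewrite pj leqNgt (leq_bigmax (F := fun i : 'I_n => (m i).+1) (Ordinal jn)).
Qed.

Section RhoFINxI.
Variables (Idx : Type) (A : Idx -> set nat) (B : Idx -> set (nat * nat)).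
Variable rho : set nat -> set (nat * nat).
Hypothesis A_infinite : forall a, infinite_set (A a).
Hypothesis B_onto_positive : forall Y, positive (FINxI I) Y <-> exists a, B a = Y.
Hypothesis rhoE : is_rho_FINxI A B rho.

Lemma rho_sub a K : finite_set K -> rho (A a `\` K) `<=` B a.
Proof. by move=> finK; rewrite rhoE // => p []. Qed.

Lemma IrhoE : Irho (Abar A) rho = FINxI I.
Proof.
apply/funext => Y; apply/propext; split => [IY|FY].
  apply: contrapT => /B_onto_positive [a Ba].
  apply: (IY (A a `\` set0)); first by exists a, set0; split; [exact: finite_set0|].
  by rewrite -Ba; apply/rho_sub/finite_set0.
move=> _ [a [K [finK ->]]] rhoY.
have /B_onto_positive : exists a', B a' = B a by exists a.
set M := Defs.maxset (K `&` A a).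
apply; apply: (FINxI_subset _ (FINxI_setU FY (FINxI_columns M))) => p Bap.
have [col|ncol] := pselect ((\bigcup_(n < M) column n) p); first by right.
by left; apply: rhoY; rewrite rhoE.
Qed.

Lemma rho_Pminus : Pminus_fun (Abar A) rho.
Proof.
rewrite /Pminus_fun IrhoE => C decC posC0 FdC.
have [D [posD DC0 DC]] :=
  FINxI_diagonal decC (FINxI_decreasing_positive decC posC0 FdC).
have [a Ba] := (B_onto_positive D).1 posD.
exists (A a `\` set0); split.
- by exists a, set0; split; [exact: finite_set0|].
- by move=> p /(rho_sub (finite_set0 _)); rewrite Ba; apply: DC0.
move=> n; have [M DCn] := DC n.
have [k Ak Mk] := infinite_nat_unbounded M (@A_infinite a).
exists [set k]; split; first exact: finite_set1.
have maxk : Defs.maxset ([set k] `&` A a) = k by apply: maxsetE => [|j [->]].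
rewrite setD0 rhoE ?maxk; last exact: finite_set1.
move=> p [Bap ncol]; rewrite Ba in Bap; apply: DCn => //.
by rewrite leqNgt; apply/negP => pM; apply: ncol; exists p.1 => //; apply: leq_trans Mk.
Qed.

End RhoFINxI.
End FINxI.

Theorem proposition5p3 (I : set (set nat)) (HI : is_ideal I) :
  ~ Pminus_ideal (FINxI I) /\
  (forall (Idx : Type) (A : Idx -> set nat) (B : Idx -> set (nat * nat)),
     almost_disjoint_family A ->
     (forall a b, B a = B b -> a = b) ->
     (forall Y, positive (FINxI I) Y <-> exists a, B a = Y) ->
     forall rho : set nat -> set (nat * nat),
       is_rho_FINxI A B rho ->
       Pminus_fun (Abar A) rho).
Proof.
split; first exact: FINxI_not_Pminus.
move=> Idx A B [_ A_infinite _] _ B_onto_positive rho rhoE.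
exact: rho_Pminus A_infinite B_onto_positive rhoE.
Qed.
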